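(* Let $n>1$, $m\ge1$, let $v\in Z_{n,m}$, let $P$ be a pivot path of $v$ (to $0$), and let $I$ be a $P$-interval. Then for all $i,j$ with $[i,i+1]\subseteq I$ and $[j,j+1]\subseteq I$, all steps of $P$ that are shifts at $i$ and all steps of $P$ that are shifts at $j$ are in the same direction.
   Context: Elements of $\mathbb{Z}_n$ are identified with representatives in $\{0,\dots,n-1\}$. $Z_{n,m}$ has vertices $u=(u_0,\dots,u_{m+1})\in\mathbb{Z}_n\times\{-1,0,1\}^m\times\mathbb{Z}_n$ with $\sum u_i\equiv0\pmod n$. A step from $v$ to $u$ is a left shift at $i$ ($0\le i\le m$) if $u_j=v_j$ for $j\notin\{i,i+1\}$, $u_i=v_i+1$, $u_{i+1}=v_{i+1}-1$, and a right shift at $i$ if $u_i=v_i-1$, $u_{i+1}=v_{i+1}+1$ (arithmetic in coordinates $0,m+1$ in $\mathbb{Z}_n$); vertices are adjacent iff related by such a shift. For a path $P$ from $v$ to the all-zero vertex $0$: $0\le p\le m$ is an inner wall of $P$ if no step of $P$ is a shift at $p$; $-1$ is a wall if no step is a left shift at $0$; $m+1$ is a wall if no step is a right shift at $m$. A $p$-pivot path of $v$ is a shortest path from $v$ to $0$ among those having $p$ as a wall; a pivot path is a $p$-pivot path for some $p$. If $p_1<\dots<p_t$ are the inner walls of a pivot path $P$ and $p_0=-1$, $p_{t+1}=m+1$, the $P$-intervals are the integer intervals $[p_k+1,p_{k+1}]$, $0\le k\le t$. *)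

From mathcomp Require Import all_boot all_order all_algebra.
Set Implicit Arguments. Unset Strict Implicit. Unset Printing Implicit Defensive.
Import Order.TTheory GRing.Theory Num.Theory.
Local Open Scope ring_scope.

(* A vertex of Z_{n,m} is a sequence u = [u_0; ...; u_{m+1}] of integers with
   u_0, u_{m+1} in {0,...,n-1} (representatives of Z_n), u_k in {-1,0,1} for
   1 <= k <= m, and sum u_k = 0 mod n. *)
Definition coord (u : seq int) (k : nat) : int := nth 0 u k.

Definition is_vertex (n m : nat) (u : seq int) : Prop :=
  [/\ size u = m.+2,
      0 <= coord u 0 < n%:Z,
      0 <= coord u m.+1 < n%:Z,
      (forall k : nat, (1 <= k <= m)%N -> coord u k \in [:: -1; 0; 1])
    & (n%:Z %| \sum_(x <- u) x)%Z].

Definition zero_vertex (m : nat) : seq int := nseq m.+2 0.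

Definition addc (n m k : nat) (d x : int) : int :=
  if (k == 0)%N || (k == m.+1)%N then ((x + d) %% n%:Z)%Z else x + d.

(* [shift n m dir i v u]: the step from v to u is a left shift at i
   (dir = true) or a right shift at i (dir = false), 0 <= i <= m. *)
Definition shift (n m : nat) (dir : bool) (i : nat) (v u : seq int) : Prop :=
  let s : int := if dir then 1 else -1 in
  [/\ (i <= m)%N,
      forall j : nat, j != i -> j != i.+1 -> coord u j = coord v j,
      coord u i = addc n m i s (coord v i)
    & coord u i.+1 = addc n m i.+1 (- s) (coord v i.+1)].

(* A path is the list of its vertices x_0, ..., x_k; its steps are the pairs
   (x_a, x_{a+1}), a < k; its length is k = size P - 1. *)
Definition is_path_to0 (n m : nat) (v : seq int) (P : seq (seq int)) : Prop :=
  [/\ (0 < size P)%N,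
      nth [::] P 0 = v,
      last v P = zero_vertex m,
      (forall a : nat, (a < size P)%N -> is_vertex n m (nth [::] P a))
    & forall a : nat, (a.+1 < size P)%N ->
        exists dir i, shift n m dir i (nth [::] P a) (nth [::] P a.+1)].

Definition step_shift (n m : nat) (P : seq (seq int)) (a : nat) (dir : bool) (i : nat)
  : Prop :=
  (a.+1 < size P)%N /\ shift n m dir i (nth [::] P a) (nth [::] P a.+1).

Definition inner_wall (n m : nat) (P : seq (seq int)) (p : nat) : Prop :=
  (p <= m)%N /\ forall a dir, ~ step_shift n m P a dir p.

Definition is_wall (n m : nat) (P : seq (seq int)) (p : int) : Prop :=
  if p == -1 then forall a, ~ step_shift n m P a true 0
  else if p == (m.+1)%:Z then forall a, ~ step_shift n m P a false m
  else exists q : nat, p = q%:Z /\ inner_wall n m P q.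

Definition pivot_path_at (n m : nat) (v : seq int) (P : seq (seq int)) (p : int)
  : Prop :=
  [/\ (-1 <= p <= (m.+1)%:Z)%R, is_path_to0 n m v P, is_wall n m P p &
      forall Q, is_path_to0 n m v Q -> is_wall n m Q p -> (size P <= size Q)%N].

Definition pivot_path (n m : nat) (v : seq int) (P : seq (seq int)) : Prop :=
  exists p : int, pivot_path_at n m v P p.

(* [lo, hi] is a P-interval: lo = p_k + 1, hi = p_{k+1} for consecutive
   elements p_k < p_{k+1} of the list -1, (inner walls), m+1. *)
Definition P_interval (n m : nat) (P : seq (seq int)) (lo hi : int) : Prop :=
  exists a b : int,
    [/\ lo = a + 1 /\ hi = b,
        a = -1 \/ exists q : nat, a = q%:Z /\ inner_wall n m P q,
        b = (m.+1)%:Z \/ exists q : nat, b = q%:Z /\ inner_wall n m P q,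
        a < b
      & forall q : nat, inner_wall n m P q -> ~ (a < q%:Z < b)].

(* Label the steps of P by their shifts and let f k be the number of left
   minus the number of right shifts of P at k.  As P ends at 0, f satisfies
   the conservation laws v_k + f k - f (k-1) = 0 (modulo n at the two ends).
   Conversely, every such f is realized by a path from v to 0 of length
   sum_k |f k| whose shifts at each k go in the direction of the sign of f k:
   repeatedly shift at a k where s * f k is maximal, s being the sign of some
   nonzero value of f.  That path has every wall of P, so by the minimality of
   P, |f k| is the number of shifts of P at k: they all go in the direction of
   the sign of f k, and f k <> 0 off the walls.  Inside a P-interval f is thus
   nowhere zero, and |f (k+1) - f k| = |v_(k+1)| <= 1, so f has constant sign
   there. *)

From mathcomp Require Import all_boot all_order all_algebra zify.
(* Imported after mathcomp, so that [coord] is [Defs.coord], not [vector.coord]. *)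
From Pilot Require Import Defs.
Import Order.TTheory GRing.Theory Num.Theory.
Local Open Scope ring_scope.
Set Implicit Arguments. Unset Strict Implicit. Unset Printing Implicit Defensive.

Definition dir_sign (d : bool) : int := if d then 1 else -1.

Definition unit_flow (d : bool) (i k : nat) : int := if k == i then dir_sign d else 0.

Lemma addc_inner n m k s x :
  (k != 0)%N -> (k != m.+1)%N -> addc n m k s x = x + s.
Proof. by rewrite /addc => /negbTE -> /negbTE ->. Qed.

Lemma addc_mod n m k s x : (addc n m k s x = x + s %[mod n])%Z.
Proof. by rewrite /addc; case: ifP => _ //; apply: modz_mod. Qed.

Lemma addc_end_range n m k s x : (0 < n)%N -> (k == 0)%N || (k == m.+1)%N ->
  0 <= addc n m k s x < n%:Z.
Proof. by rewrite /addc => n_gt0 ->; rewrite modz_ge0 ?ltz_pmod //; lia. Qed.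

Lemma mem_m101 (x : int) : (x \in [:: -1; 0; 1]) = (`|x| <= 1).
Proof. by rewrite !inE; lia. Qed.

Section ShiftCoordinates.

Variables (n m : nat) (d : bool) (i : nat) (x y : seq int).
Hypothesis xy : shift n m d i x y.

Lemma shift_coord_inner k : (1 <= k <= m)%N ->
  coord y k = coord x k + unit_flow d i k - unit_flow d i k.-1.
Proof.
case: xy => le_im same yi yi1 k_in; rewrite -/(dir_sign d) in yi yi1.
rewrite /unit_flow; have [ki|ne_ki] := eqVneq k i.
  subst k; have -> : (i.-1 == i) = false by lia.
  by rewrite yi addc_inner ?subr0 //; lia.
have [ki1|ne_ki1] := eqVneq k i.+1.
  by subst k; rewrite yi1 addc_inner /= ?eqxx; lia.
have -> : (k.-1 == i) = false by lia.
by rewrite same // subr0 addr0.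
Qed.

Lemma shift_coord0 : (coord y 0 = coord x 0 + unit_flow d i 0 %[mod n])%Z.
Proof.
case: xy => _ same yi _; rewrite -/(dir_sign d) in yi; rewrite /unit_flow.
have [i0|ne_i0] := eqVneq 0%N i; first by subst i; rewrite yi addc_mod.
by rewrite addr0 same // eq_sym.
Qed.

Lemma shift_coord_last :
  (coord y m.+1 = coord x m.+1 - unit_flow d i m %[mod n])%Z.
Proof.
case: xy => le_im same _ yi1; rewrite -/(dir_sign d) in yi1; rewrite /unit_flow.
have [im|ne_im] := eqVneq m i; first by subst i; rewrite yi1 addc_mod.
by rewrite same ?subr0 //; lia.
Qed.

End ShiftCoordinates.

Lemma shift_coord_changed n m d i x y : (1 < n)%N ->
  shift n m d i x y -> coord y i != coord x i.
Proof.
move=> n_gt1 xy; apply/eqP => yx.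
have [i0|i_gt0] := posnP i.
  subst i; have /eqP := shift_coord0 xy.
  rewrite yx /unit_flow eqxx eqz_mod_dvd.
  have -> : coord x 0 - (coord x 0 + dir_sign d) = - dir_sign d by lia.
  by rewrite dvdzE; case: d {xy} => /=; rewrite dvdn1; lia.
have i_in : (1 <= i <= m)%N by case: xy => le_im _ _ _; lia.
move: (shift_coord_inner xy i_in); rewrite yx /unit_flow eqxx.
have -> : (i.-1 == i) = false by lia.
by case: d {xy} => /=; lia.
Qed.

Lemma shift_inj n m d i d' i' x y : (1 < n)%N -> (1 <= m)%N ->
  shift n m d i x y -> shift n m d' i' x y -> (d, i) = (d', i').
Proof.
move=> n_gt1 m_gt0 xy xy'.
have near (e e' : bool) (j j' : nat) : shift n m e j x y -> shift n m e' j' x y ->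
    (j == j') || (j == j'.+1).
  move=> /(shift_coord_changed n_gt1) changed [_ same _ _].
  by apply: contraNT changed; rewrite negb_or => /andP[ne ne1]; rewrite same.
have ii' : i = i' by move: (near _ _ _ _ xy xy') (near _ _ _ _ xy' xy); lia.
subst i'; congr (_, _).
have le_im : (i <= m)%N by case: xy.
have k_in : (1 <= maxn 1 i <= m)%N by lia.
move: (shift_coord_inner xy k_in); rewrite (shift_coord_inner xy' k_in) /unit_flow.
have [->|i_gt0] := posnP i; first by case: d d' {xy xy'} => -[] /=; lia.
rewrite (maxn_idPr i_gt0) eqxx; have -> : (i.-1 == i) = false by lia.
by case: d d' {xy xy'} => -[] /=; lia.
Qed.

(* [f k] stands for the net number of left shifts at [k] along a path from
   [v] to the zero vertex. *)
Definition is_flow_to0 (n m : nat) (v : seq int) (f : nat -> int) : Prop :=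
  [/\ forall k, (1 <= k <= m)%N -> coord v k + f k - f k.-1 = 0,
      (coord v 0 + f 0%N = 0 %[mod n])%Z
    & (coord v m.+1 - f m = 0 %[mod n])%Z].

Lemma is_flow_to0_shift n m d i x y f g :
  shift n m d i x y -> (forall k, f k = g k + unit_flow d i k) ->
  is_flow_to0 n m x f <-> is_flow_to0 n m y g.
Proof.
move=> xy fg.
have inner k : (1 <= k <= m)%N ->
    coord y k + g k - g k.-1 = coord x k + f k - f k.-1.
  by move=> k_in; rewrite (shift_coord_inner xy k_in) !fg; lia.
have at0 : (coord y 0 + g 0%N = coord x 0 + f 0%N %[mod n])%Z.
  by rewrite -modzDml (shift_coord0 xy) modzDml fg; congr (_ %% _)%Z; lia.
have atlast : (coord y m.+1 - g m = coord x m.+1 - f m %[mod n])%Z.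
  by rewrite -modzDml (shift_coord_last xy) modzDml fg; congr (_ %% _)%Z; lia.
split=> -[f_inner f_0 f_last]; split.
- by move=> k k_in; rewrite inner // f_inner.
- by rewrite at0.
- by rewrite atlast.
- by move=> k k_in; rewrite -inner // f_inner.
- by rewrite -at0.
- by rewrite -atlast.
Qed.

Lemma coord_zero_vertex m k : coord (zero_vertex m) k = 0.
Proof. by rewrite /coord nth_nseq if_same. Qed.

Lemma is_flow_to0_eq0 n m v f : is_vertex n m v -> is_flow_to0 n m v f ->
  (forall k, (k <= m)%N -> f k = 0) -> v = zero_vertex m.
Proof.
move=> [size_v v0 vm1 _ _] [inner at0 atlast] f0.
apply: (@eq_from_nth _ 0); first by rewrite size_nseq.
move=> k; rewrite size_v => lt_k; rewrite -/(coord v k) -/(coord _ k) coord_zero_vertex.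
have [->|k_gt0] := posnP k; first by move: at0; rewrite f0 // addr0 mod0z modz_small.
have [->|ne_km1] := eqVneq k m.+1.
  by move: atlast; rewrite f0 // subr0 mod0z modz_small.
have k_in : (1 <= k <= m)%N by lia.
by move: (inner k k_in); rewrite !f0; lia.
Qed.

Lemma is_flow_to0_unit_steps n m v f : is_vertex n m v -> is_flow_to0 n m v f ->
  forall k, (1 <= k <= m)%N -> `|f k - f k.-1| <= 1.
Proof.
move=> [_ _ _ v_inner _] [f_inner _ _] k k_in.
by have := f_inner _ k_in; have := v_inner _ k_in; rewrite mem_m101; lia.
Qed.

Definition flow (S : seq (bool * nat)) (k : nat) : int :=
  (count_mem (true, k) S)%:Z - (count_mem (false, k) S)%:Z.

Definition shifts_at (S : seq (bool * nat)) (k : nat) : nat :=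
  (count_mem (true, k) S + count_mem (false, k) S)%N.

Definition flow_norm (m : nat) (f : nat -> int) : nat := (\sum_(k < m.+1) `|f k|)%N.

Lemma flow_cons d i S k : flow ((d, i) :: S) k = flow S k + unit_flow d i k.
Proof.
rewrite /flow /unit_flow /= !xpair_eqE (eq_sym i k).
by case: d; case: (k == i) => /=; lia.
Qed.

Lemma abs_flow_le S k : (`|flow S k| <= shifts_at S k)%N.
Proof. by rewrite /flow /shifts_at; lia. Qed.

Lemma sum_shifts_at m S : all (fun s => s.2 <= m)%N S ->
  (\sum_(k < m.+1) shifts_at S k)%N = size S.
Proof.
elim: S => [|[d i] S IH] /=; first by rewrite big1.
case/andP => le_im /IH <-.
rewrite (eq_bigr (fun k : 'I_m.+1 => (k == i :> nat) + shifts_at S k)%N); last first.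
  move=> k _; rewrite /shifts_at /= !xpair_eqE (eq_sym i).
  by case: d; case: (k == i :> nat) => /=; lia.
by rewrite big_split /= -big_mkcond (big_ord1_eq _ (fun=> 1%N)) ltnS le_im.
Qed.

Lemma flow_norm_tight m S : all (fun s => s.2 <= m)%N S ->
  (size S <= flow_norm m (flow S))%N ->
  forall k, (k <= m)%N -> `|flow S k|%N = shifts_at S k.
Proof.
move=> labels_le le_norm k le_km.
have [_] := leqif_sum (fun (k : 'I_m.+1) (_ : true) => leqif_eq (abs_flow_le S k)).
rewrite eqn_leq leq_sum => [|l _]; last exact: abs_flow_le.
rewrite sum_shifts_at // le_norm /= => /esym/forallP/(_ (Ordinal (le_km : (k < m.+1)%N))).
by move=> /eqP.
Qed.

Lemma tight_flow_sign S d k : `|flow S k|%N = shifts_at S k ->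
  (d, k) \in S -> 0 < dir_sign d * flow S k.
Proof.
by rewrite -has_pred1 has_count /flow /shifts_at /dir_sign; case: d => /=; lia.
Qed.

Lemma flow_sign_mem S d k : 0 < dir_sign d * flow S k -> (d, k) \in S.
Proof. by rewrite -has_pred1 has_count /flow /dir_sign; case: d => /=; lia. Qed.

Definition step_labels (n m : nat) (P : seq (seq int)) (S : seq (bool * nat))
  : Prop :=
  size S = (size P).-1 /\
  forall a, (a < size S)%N -> shift n m (nth (true, 0%N) S a).1
    (nth (true, 0%N) S a).2 (nth [::] P a) (nth [::] P a.+1).

Lemma exists_step_labels n m P :
  (forall a, (a.+1 < size P)%N ->
     exists d i, shift n m d i (nth [::] P a) (nth [::] P a.+1)) ->
  exists S, step_labels n m P S.
Proof.
elim: P => [|x [|y P] IH] steps; try by exists [::].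
have [S [size_S steps_S]] := IH (fun a => steps a.+1).
have [d [i xy]] := steps 0%N isT.
exists ((d, i) :: S); split=> [|[|a] a_lt] //=; first by rewrite size_S.
exact: steps_S.
Qed.

Lemma step_labels_cons n m d i x P S : (0 < size P)%N ->
  shift n m d i x (nth [::] P 0) -> step_labels n m P S ->
  step_labels n m (x :: P) ((d, i) :: S).
Proof.
case: P => // y P _ xy [size_S steps].
by split=> [|[|a] a_lt] //=; [rewrite size_S | apply: steps].
Qed.

Lemma step_labels_le n m P S : step_labels n m P S -> all (fun s => s.2 <= m)%N S.
Proof. by case=> _ steps; apply/(all_nthP (true, 0%N)) => a /steps[]. Qed.

Lemma mem_step_labels n m P S d k : step_labels n m P S ->
  (d, k) \in S -> exists a, step_shift n m P a d k.
Proof.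
move=> [size_S steps] dk_S; exists (index (d, k) S).
have a_lt : (index (d, k) S < size S)%N by rewrite index_mem.
by split; [lia | have := steps _ a_lt; rewrite nth_index].
Qed.

Lemma step_labels_mem n m P S a d k : (1 < n)%N -> (1 <= m)%N ->
  step_labels n m P S -> step_shift n m P a d k -> (d, k) \in S.
Proof.
move=> n_gt1 m_gt0 [size_S steps] [a_lt xy].
have a_lt' : (a < size S)%N by lia.
have := shift_inj n_gt1 m_gt0 (steps a a_lt') xy.
by rewrite -surjective_pairing => <-; apply: mem_nth.
Qed.

Lemma step_labels_flow n m x P S : step_labels n m (x :: P) S ->
  last x P = zero_vertex m -> is_flow_to0 n m x (flow S).
Proof.
elim: S x P => [|[d i] S IH] x [|y P] [//= size_S steps] last_P.
- rewrite /= in last_P; subst x; rewrite /flow /=.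
  by split=> [k _||]; rewrite !coord_zero_vertex.
- apply/(is_flow_to0_shift (steps 0%N isT) (flow_cons d i S)).
  by apply: IH last_P; split=> [|a]; [case: size_S | apply: (steps a.+1)].
Qed.

Lemma is_path_to0_flow n m v P S : is_path_to0 n m v P -> step_labels n m P S ->
  is_flow_to0 n m v (flow S).
Proof.
by case: P => [|x P] [//= _ <- last_P _ _] P_S; apply: step_labels_flow P_S last_P.
Qed.

Lemma is_path_to0_vertex n m v P : is_path_to0 n m v P -> is_vertex n m v.
Proof. by case=> P_gt0 <- _ vtx_P _; apply: vtx_P. Qed.

Lemma is_path_to0_cons n m d k x y P : is_vertex n m x ->
  shift n m d k x y -> is_path_to0 n m y P -> is_path_to0 n m x (x :: P).
Proof.
move=> x_vtx xy [+ + last_P vtx_P steps_P]; case: P last_P vtx_P steps_P => //.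
move=> y' P last_P vtx_P steps_P _ /= y'y; subst y'.
split=> // [[|a] a_lt|[|a] a_lt] //=; [exact: vtx_P | by exists d, k | exact: steps_P].
Qed.

Lemma sum_set_nth (u : seq int) k (y : int) : (k < size u)%N ->
  \sum_(x <- set_nth 0 u k y) x = \sum_(x <- u) x - nth 0 u k + y.
Proof.
elim: u k => [|x u IH] [|k] //= k_lt; rewrite !big_cons ?IH ?addrA //.
by rewrite [x + _]addrC addrK addrC.
Qed.

Definition shift_vertex (n m : nat) (d : bool) (k : nat) (v : seq int)
  : seq int :=
  set_nth 0 (set_nth 0 v k (addc n m k (dir_sign d) (coord v k)))
    k.+1 (addc n m k.+1 (- dir_sign d) (coord v k.+1)).

Section ShiftVertex.

Variables (n m : nat) (d : bool) (k : nat) (v : seq int).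

Lemma coord_shift_vertex j : coord (shift_vertex n m d k v) j =
  if j == k.+1 then addc n m k.+1 (- dir_sign d) (coord v k.+1)
  else if j == k then addc n m k (dir_sign d) (coord v k) else coord v j.
Proof.
rewrite /shift_vertex; move: (addc _ _ k _ _) (addc _ _ k.+1 _ _) => y y1.
by rewrite /coord !nth_set_nth /= nth_set_nth.
Qed.

Lemma shift_vertexP : (k <= m)%N -> shift n m d k v (shift_vertex n m d k v).
Proof.
move=> le_km; split=> // [j /negbTE ne_jk /negbTE ne_jk1||];
  by rewrite coord_shift_vertex ?eqxx ?ne_jk ?ne_jk1 ?(ltn_eqF (ltnSn k)).
Qed.

Lemma is_vertex_shift_vertex : (1 < n)%N -> (k <= m)%N -> is_vertex n m v ->
  ((1 <= k)%N -> `|coord v k + dir_sign d| <= 1) ->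
  ((k < m)%N -> `|coord v k.+1 - dir_sign d| <= 1) ->
  is_vertex n m (shift_vertex n m d k v).
Proof.
move=> n_gt1 le_km [size_v v0 vm1 v_inner v_sum] ok_k ok_k1.
have n_gt0 : (0 < n)%N by lia.
split.
- by rewrite !size_set_nth size_v; lia.
- rewrite coord_shift_vertex (_ : (0 == k.+1)%N = false) //.
  by case: ifP => [/eqP k0|_] //; apply: addc_end_range => //; rewrite -k0.
- rewrite coord_shift_vertex eqSS; case: ifP => [/eqP mk|_].
    by apply: addc_end_range => //; rewrite -mk eqxx orbT.
  by have -> : (m.+1 == k) = false by lia.
- move=> j j_in; rewrite coord_shift_vertex mem_m101.
  case: ifP => [/eqP jk1|_]; first by rewrite addc_inner ?ok_k1; lia.
  case: ifP => [/eqP jk|_]; first by rewrite addc_inner ?ok_k; lia.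
  by rewrite -mem_m101 v_inner.
- rewrite /shift_vertex; set y := addc _ _ k _ _; set y1 := addc _ _ k.+1 _ _.
  rewrite !sum_set_nth ?size_set_nth ?size_v; try lia.
  rewrite nth_set_nth /= (_ : (k.+1 == k) = false); last by lia.
  have /eqP := addc_mod n m k (dir_sign d) (coord v k).
  have /eqP := addc_mod n m k.+1 (- dir_sign d) (coord v k.+1).
  rewrite -/y -/y1 !eqz_mod_dvd => dvd_y1 dvd_y.
  have -> : \sum_(x <- v) x - coord v k + y - coord v k.+1 + y1 =
    \sum_(x <- v) x + (y - (coord v k + dir_sign d))
      + (y1 - (coord v k.+1 - dir_sign d)) by lia.
  exact: rpredD (rpredD v_sum dvd_y) dvd_y1.
Qed.

End ShiftVertex.

Lemma flow_norm_drain m f d k : (k <= m)%N -> 0 < dir_sign d * f k ->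
  (flow_norm m (fun l => f l - unit_flow d k l)).+1 = flow_norm m f.
Proof.
move=> le_km pos; pose k' := Ordinal (le_km : (k < m.+1)%N).
rewrite /flow_norm (bigD1 k') // [RHS](bigD1 k') //= /unit_flow eqxx.
rewrite (eq_bigr (fun l : 'I_m.+1 => `|f l|%N)) => [|l]; last first.
  by rewrite -val_eqE /= => /negbTE ->; rewrite subr0.
by move: pos; rewrite /dir_sign; case: d => /=; lia.
Qed.

Lemma exists_extremal m f : flow_norm m f != 0%N ->
  exists d k, [/\ (k <= m)%N, 0 < dir_sign d * f k &
    forall l, (l <= m)%N -> dir_sign d * f l <= dir_sign d * f k].
Proof.
move=> norm_neq0.
have /existsP[l fl_neq0] : [exists l : 'I_m.+1, f l != 0].
  move: norm_neq0; apply: contraTT => /existsPn f0.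
  by rewrite negbK /flow_norm big1 // => l _; have /negPn/eqP -> := f0 l.
pose d := 0 < f l.
have [k _ k_max] := arg_maxP (fun k : 'I_m.+1 => dir_sign d * f k) (isT : xpredT l).
exists d, k; split; first by rewrite -ltnS ltn_ord.
  by have := k_max l isT; rewrite /d /dir_sign; case: ltP fl_neq0 => /=; lia.
by move=> j le_jm; apply: (k_max (Ordinal (le_jm : (j < m.+1)%N))).
Qed.

Lemma flow_first_step n m v f : (1 < n)%N -> is_vertex n m v ->
  is_flow_to0 n m v f -> flow_norm m f != 0%N ->
  exists d k, let f' l := f l - unit_flow d k l in
  [/\ 0 < dir_sign d * f k, (flow_norm m f').+1 = flow_norm m f,
      shift n m d k v (shift_vertex n m d k v),
      is_vertex n m (shift_vertex n m d k v)
    & is_flow_to0 n m (shift_vertex n m d k v) f'].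
Proof.
move=> n_gt1 v_vtx v_f norm_neq0.
have [d [k [le_km pos k_max]]] := exists_extremal norm_neq0.
have vw := @shift_vertexP n m d k v le_km.
have [_ _ _ v_inner _] := v_vtx; have [f_inner _ _] := v_f.
have f_steps := is_flow_to0_unit_steps v_vtx v_f.
exists d, k; split => //; first exact: flow_norm_drain.
  (* By maximality of [dir_sign d * f k], coordinates [k], [k+1] stay in {-1, 0, 1}. *)
  apply: is_vertex_shift_vertex => // [k_gt0|lt_km].
    have k_in : (1 <= k <= m)%N by lia.
    have le_k1m : (k.-1 <= m)%N by lia.
    move: (k_max _ le_k1m) (f_inner _ k_in) (f_steps _ k_in).
    by rewrite /dir_sign; case: (d) => /=; lia.
  have k1_in : (1 <= k.+1 <= m)%N by lia.
  move: (k_max _ lt_km) (f_inner _ k1_in) (f_steps _ k1_in).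
  by rewrite /dir_sign; case: (d) => /=; lia.
by apply/(is_flow_to0_shift (f := f) vw) => // l; rewrite subrK.
Qed.

Lemma exists_flow_path n m v f : (1 < n)%N -> is_vertex n m v ->
  is_flow_to0 n m v f ->
  exists P S, [/\ is_path_to0 n m v P, step_labels n m P S,
    size S = flow_norm m f & all (fun s => 0 < dir_sign s.1 * f s.2) S].
Proof.
move=> n_gt1; move: {2}(flow_norm m f) (erefl (flow_norm m f)) => N.
elim: N v f => [|N IH] v f norm_f v_vtx v_f.
  have f0 k : (k <= m)%N -> f k = 0.
    move=> le_km; move/eqP: norm_f; rewrite sum_nat_eq0 => /forallP.
    by move=> /(_ (Ordinal (le_km : (k < m.+1)%N))); rewrite absz_eq0 => /eqP.
  move: (v_vtx); rewrite (is_flow_to0_eq0 v_vtx v_f f0) => z_vtx.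
  by exists [:: zero_vertex m], [::]; rewrite norm_f; split=> //; split=> // -[].
have [|d [k [pos norm_f' vw w_vtx w_f']]] := flow_first_step n_gt1 v_vtx v_f.
  by rewrite norm_f.
have [P [S [w_P P_S size_S S_sign]]] :=
  IH _ _ (succn_inj (etrans norm_f' norm_f)) w_vtx w_f'.
exists (v :: P), ((d, k) :: S); split.
- exact: is_path_to0_cons v_vtx vw w_P.
- by case: w_P => P_gt0 head_P _ _ _; apply: step_labels_cons; rewrite ?head_P.
- by rewrite /= size_S.
rewrite /= pos; apply: sub_all S_sign => -[d' k'] /=; rewrite /unit_flow.
case: eqP => [->|_]; last by rewrite subr0.
by move: pos; rewrite /dir_sign; case: (d); case: d' => /=; lia.
Qed.

Lemma is_wall_sub n m P Q p :
  (forall a d k, step_shift n m Q a d k -> exists b, step_shift n m P b d k) ->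
  is_wall n m P p -> is_wall n m Q p.
Proof.
move=> QP; rewrite /is_wall; case: ifP => _; last case: ifP => _.
- by move=> P_wall a /QP[b]; apply: P_wall.
- by move=> P_wall a /QP[b]; apply: P_wall.
move=> [q [-> [le_qm P_wall]]]; exists q; split=> //; split=> // a d.
by move=> /QP[b]; apply: P_wall.
Qed.

Lemma pivot_path_step_sign n m v P S p a d k : (1 < n)%N -> (1 <= m)%N ->
  pivot_path_at n m v P p -> step_labels n m P S ->
  step_shift n m P a d k -> 0 < dir_sign d * flow S k.
Proof.
move=> n_gt1 m_gt0 [_ v_P wall_P min_P] P_S step.
have [Q [T [v_Q Q_T size_T T_sign]]] :=
  exists_flow_path n_gt1 (is_path_to0_vertex v_P) (is_path_to0_flow v_P P_S).
have wall_Q : is_wall n m Q p.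
  apply: is_wall_sub wall_P => b d' k' /(step_labels_mem n_gt1 m_gt0 Q_T) dk_T.
  by apply: mem_step_labels P_S _; apply: flow_sign_mem; apply: (allP T_sign _ dk_T).
(* [size S < size P <= size Q = (flow_norm m (flow S)).+1] *)
have le_PQ := min_P Q v_Q wall_Q.
have le_km : (k <= m)%N by case: step => _ [].
apply: tight_flow_sign (step_labels_mem n_gt1 m_gt0 P_S step).
apply: flow_norm_tight le_km; first exact: step_labels_le P_S.
by case: P_S => -> _; case: Q_T size_T => -> _ <-; lia.
Qed.

Lemma sign_constant_unit_steps (g : nat -> int) x y : (x <= y)%N ->
  (forall k, (x <= k < y)%N -> `|g k.+1 - g k| <= 1) ->
  (forall k, (x <= k <= y)%N -> g k != 0) -> (0 < g x) = (0 < g y).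
Proof.
elim: y => [|y IH]; first by rewrite leqn0 => /eqP ->.
rewrite leq_eqVlt => /orP[/eqP -> //|lt_xy] steps nz.
have step_y : `|g y.+1 - g y| <= 1 by apply: steps; lia.
have [nz_y nz_y1] : g y != 0 /\ g y.+1 != 0 by split; apply: nz; lia.
rewrite IH => [||k k_in|k k_in]; [lia | lia | apply: steps | apply: nz]; lia.
Qed.

Lemma P_interval_inner n m P lo hi q : P_interval n m P lo hi ->
  lo <= q%:Z -> q%:Z + 1 <= hi -> (q <= m)%N /\ ~ inner_wall n m P q.
Proof.
move=> [a [b [[-> ->] _ b_ok _ no_wall]]] a_q q_b.
split; last by move=> /no_wall; apply; lia.
by case: b_ok => [b_eq|[q' [b_eq [le_q'm _]]]]; rewrite b_eq in q_b; lia.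
Qed.

Lemma pivot_interval_sign n m v P S p lo hi x y : (1 < n)%N -> (1 <= m)%N ->
  pivot_path_at n m v P p -> step_labels n m P S -> P_interval n m P lo hi ->
  (x <= y)%N -> lo <= x%:Z -> y%:Z + 1 <= hi ->
  (0 < flow S x) = (0 < flow S y).
Proof.
move=> n_gt1 m_gt0 P_pivot P_S P_lohi le_xy lo_x y_hi.
have v_P : is_path_to0 n m v P by case: P_pivot.
have f_steps :=
  is_flow_to0_unit_steps (is_path_to0_vertex v_P) (is_path_to0_flow v_P P_S).
have lo_y : lo <= y%:Z by lia.
have [le_ym _] := P_interval_inner P_lohi lo_y y_hi.
apply: sign_constant_unit_steps le_xy _ _ => k k_in.
  by apply: (f_steps k.+1); lia.
have [lo_k k_hi] : lo <= k%:Z /\ k%:Z + 1 <= hi by split; lia.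
have [le_km not_wall] := P_interval_inner P_lohi lo_k k_hi.
apply/eqP => fk0; apply: not_wall; split=> // c e.
by move/(pivot_path_step_sign n_gt1 m_gt0 P_pivot P_S); rewrite fk0 mulr0 ltxx.
Qed.

Theorem lemma5p11 (n m : nat) (v : seq int) (P : seq (seq int)) (lo hi : int)
  (i j : nat) :
  (1 < n)%N -> (1 <= m)%N -> is_vertex n m v -> pivot_path n m v P ->
  P_interval n m P lo hi ->
  lo <= i%:Z -> i%:Z + 1 <= hi -> lo <= j%:Z -> j%:Z + 1 <= hi ->
  forall (a b : nat) (da db : bool),
    step_shift n m P a da i -> step_shift n m P b db j -> da = db.
Proof.
(* [is_vertex n m v] is implied by [pivot_path n m v P]. *)
move=> n_gt1 m_gt0 _ [p P_pivot] P_lohi lo_i i_hi lo_j j_hi a b da db step_a step_b.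
have [_ _ _ _ steps] : is_path_to0 n m v P by case: P_pivot.
have [S P_S] := exists_step_labels steps.
have step_sign := pivot_path_step_sign n_gt1 m_gt0 P_pivot P_S.
have interval_sign := pivot_interval_sign n_gt1 m_gt0 P_pivot P_S P_lohi.
have sign_ij : (0 < flow S i) = (0 < flow S j).
  case: (leqP i j) => [le_ij|/ltnW le_ji]; first exact: interval_sign.
  by rewrite (interval_sign j i).
move: (step_sign _ _ _ step_a) (step_sign _ _ _ step_b) sign_ij.
by rewrite /dir_sign; case: (da); case: (db) => //=; lia.
Qed.
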